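(* Let $d\ge 2$, let $\mathbf f_t(z)=\frac{z^d+t}{z}\in\overline{\mathbb Q}(t)(z)$, and let $\mathbf c=\mathbf A/\mathbf B\in\overline{\mathbb Q}(t)$ with $\mathbf A,\mathbf B\in\overline{\mathbb Q}[t]$ coprime. If $\mathbf c(0)=0$, then $$\widehat h_{\mathbf f}(\mathbf c)=\frac{\deg(\mathbf f_t(\mathbf c(t)))}{d}=\frac{\deg(\mathbf f_t^2(\mathbf c(t)))}{d^2}.$$
   Context: For a rational function $g\in\overline{\mathbb Q}(t)$, $\deg(g)$ is the maximum of the degrees of numerator and denominator in lowest terms. $\widehat h_{\mathbf f}(\mathbf c)=\lim_{n\to\infty}\deg(\mathbf f_t^n(\mathbf c(t)))/d^n$, where $\mathbf f_t^n$ denotes the $n$-th iterate of $z\mapsto\mathbf f_t(z)$. The condition $\mathbf c(0)=0$ means $\mathbf A(0)=0$. *)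

From HB Require Import structures.
From mathcomp Require Import all_boot all_order all_algebra all_field.
From mathcomp Require Import fraction.
From mathcomp Require Import all_classical all_reals all_analysis.
Set Implicit Arguments. Unset Strict Implicit. Unset Printing Implicit Defensive.
Import Order.TTheory GRing.Theory Num.Theory.
Local Open Scope ring_scope.

(* Qbar = algC (algebraic numbers); Qbar(t) = {fraction {poly algC}}, t = 'X. *)
Notation Kt := {fraction {poly algC}}.

Definition polyF (p : {poly algC}) : Kt := tofrac p.

Definition tvar : Kt := polyF 'X.

(* degree of a rational function: max of the degrees of numerator and
   denominator in lowest terms (reduce a representative by its gcd). *)
Definition rdeg (g : Kt) : nat :=
  let n := (frac (repr g)).1 in
  let m := (frac (repr g)).2 in
  let g0 := gcdp n m in
  (maxn (size (n %/ g0)) (size (m %/ g0))).-1.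

(* points of P^1 over Qbar(t): None is the point at infinity *)
Definition P1 := option Kt.

Definition fT (d : nat) (z : P1) : P1 :=
  match z with
  | None => None
  | Some w => if w == 0 then None else Some ((w ^+ d + tvar) / w)
  end.

(* degree of a point of P^1(Qbar(t)); oo is a constant point (degree 0) *)
Definition pdeg (z : P1) : nat :=
  match z with None => 0%N | Some w => rdeg w end.

From HB Require Import structures.
From mathcomp Require Import all_boot all_order all_algebra all_field.
From mathcomp Require Import fraction generic_quotient.
From mathcomp Require Import all_classical all_reals all_analysis.
From mathcomp Require Import ring zify.
Import Order.TTheory GRing.Theory Num.Theory numFieldNormedType.Exports.
Local Open Scope classical_set_scope.
Local Open Scope ring_scope.

(* Write c = t A1 / B.  Then f(c) = (t^(d-1) A1^d + B^d) / (A1 B^(d-1)) is a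
   reduced fraction P/Q with P(0) <> 0 and deg Q < deg P.  The map f sends such
   a fraction to (P^d + t Q^d) / (P Q^(d-1)), again of this kind and with
   deg P multiplied by d.  Hence deg f^(n+1)(c) = d^n deg f(c), and the
   normalized degrees are constant from n = 1 on. *)

Section ReducedFractions.
Context {F : fieldType}.
Implicit Types P Q A B : {poly F}.

Lemma coprimep_cross_eqp P Q A B : coprimep P Q -> coprimep A B ->
  P * B = Q * A -> P %= A /\ Q %= B.
Proof.
move=> cPQ cAB E; split; apply/andP; split.
- by rewrite -(Gauss_dvdpr _ cPQ) -E dvdp_mulr.
- by rewrite -(Gauss_dvdpl _ cAB) E dvdp_mull.
- by rewrite coprimep_sym in cPQ; rewrite -(Gauss_dvdpr _ cPQ) E dvdp_mulr.
- by rewrite coprimep_sym in cAB; rewrite -(Gauss_dvdpl _ cAB) -E dvdp_mull.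
Qed.

Lemma size_exp_neq0 P n : P != 0 -> size (P ^+ n) = ((size P).-1 * n).+1.
Proof. by move=> P0; rewrite -size_exp prednK // size_poly_gt0 expf_neq0. Qed.

Definition good_fraction P Q :=
  [/\ ~~ root P 0, Q != 0, coprimep P Q & (size Q < size P)%N].

Lemma size_step_num d P Q : (1 < d)%N -> good_fraction P Q ->
  (size (P ^+ d + 'X * Q ^+ d)).-1 = (d * (size P).-1)%N.
Proof.
move=> d_gt1 [_ Q0 _ sQP].
have P0 : P != 0 by rewrite -size_poly_gt0 (leq_ltn_trans _ sQP).
rewrite size_polyDl ?size_exp_neq0 1?mulnC //.
rewrite mulrC size_mulX ?expf_neq0 // size_exp_neq0 //.
have : (0 < size Q)%N by rewrite size_poly_gt0.
move: sQP; case: (size Q) => [|q] //; case: (size P) => [|p] //= qp _.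
have : (d * q.+1 <= d * p)%N by rewrite leq_mul2l -ltnS qp orbT.
lia.
Qed.

Lemma good_fraction_step d P Q : (1 < d)%N -> good_fraction P Q ->
  good_fraction (P ^+ d + 'X * Q ^+ d) (P * Q ^+ d.-1).
Proof.
move=> d_gt1 gPQ; have [P00 Q0 cPQ sQP] := gPQ.
have P0 : P != 0 by rewrite -size_poly_gt0 (leq_ltn_trans _ sQP).
have N00 : ~~ root (P ^+ d + 'X * Q ^+ d) 0.
  by rewrite /root !hornerE expf_neq0.
have N0 : P ^+ d + 'X * Q ^+ d != 0 by apply: contraNneq N00 => ->; apply: root0.
move: d_gt1 N00 N0; case: d => [|[|d]] // _ N00 N0; split => //.
- by rewrite mulf_neq0 ?expf_neq0.
- rewrite coprimepMr; apply/andP; split.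
    rewrite coprimep_sym exprSr coprimep_addl_mul coprimepMr coprimepX P00.
    exact: coprimep_expr.
  rewrite coprimep_pexpr // coprimep_sym addrC exprSr mulrA coprimep_addl_mul.
  by apply: coprimep_expr; rewrite coprimep_sym.
- rewrite -(prednK (_ : 0 < size (P ^+ d.+2 + 'X * Q ^+ d.+2)%R)%N); last first.
    by rewrite size_poly_gt0.
  rewrite size_step_num // size_mul ?expf_neq0 // size_exp_neq0 //.
  have sQ : (0 < size Q)%N by rewrite size_poly_gt0.
  move: sQP sQ; case: (size Q) => [|q] //; case: (size P) => [|p] //= qp _.
  have : (q * d.+1 < p * d.+1)%N by rewrite ltn_mul2r.
  lia.
Qed.

Lemma good_fraction_root_step d A B : (1 < d)%N -> A != 0 ->
  coprimep ('X * A) B ->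
  good_fraction ('X ^+ d.-1 * A ^+ d + B ^+ d) (A * B ^+ d.-1).
Proof.
case: d => [|[|d]] // _ A0; rewrite coprimepMl => /andP[cXB cAB].
have B00 : ~~ root B 0 by rewrite -coprimepX coprimep_sym.
have B0 : B != 0 by apply: contraNneq B00 => ->; apply: root0.
split.
- by rewrite /root hornerD hornerM hornerXn expr0n mul0r add0r horner_exp expf_neq0.
- by rewrite mulf_neq0 ?expf_neq0.
- rewrite coprimepMr; apply/andP; split.
    rewrite coprimep_sym exprSr mulrA coprimep_addl_mul.
    exact: coprimep_expr.
  rewrite coprimep_pexpr // coprimep_sym addrC exprSr coprimep_addl_mul.
  by rewrite coprimepMr !coprimep_expr // coprimep_sym.
- have sXA : size ('X ^+ d.+1 * A ^+ d.+2) = (d.+1 + ((size A).-1 * d.+2).+1)%N.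
    by rewrite mulrC size_mulXn ?expf_neq0 // size_exp_neq0.
  have sB : size (B ^+ d.+2) = ((size B).-1 * d.+2).+1 by rewrite size_exp_neq0.
  rewrite size_mul ?expf_neq0 // size_exp_neq0 //.
  have : (0 < size A)%N by rewrite size_poly_gt0.
  have : (0 < size B)%N by rewrite size_poly_gt0.
  move: sXA sB; case: (size A) => [|a] //; case: (size B) => [|b] //= sXA sB _ _.
  have [ba | ab] := leqP b a.
    have : (b * d.+2 <= a * d.+2)%N by rewrite leq_mul2r ba orbT.
    have : (b * d.+1 <= a * d.+1)%N by rewrite leq_mul2r ba orbT.
    by move=> *; rewrite size_polyDl sXA ?sB; lia.
  have : (a.+1 * d.+2 <= b * d.+2)%N by rewrite leq_mul2r ab orbT.
  by move=> *; rewrite addrC size_polyDl sB ?sXA; lia.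
Qed.
End ReducedFractions.

Lemma frac_step_identity (K : fieldType) (a x p q e : K) :
  p != 0 -> q != 0 -> e != 0 ->
  (a / (q * e) + x) / (p / q) = (a + x * (q * e)) / (p * e).
Proof. by move=> p0 q0 e0; field; rewrite p0 q0 e0. Qed.

Lemma mul_repr_den (R : idomainType) (x : {fraction R}) :
  x * tofrac (frac (repr x)).2 = tofrac (frac (repr x)).1.
Proof.
rewrite -{1}[x]reprK.
have tofracE y : tofrac y = (\pi_({fraction R}) (Ratio y 1))%qT by rewrite !piE.
rewrite !tofracE -[_ * _]/(FracField.mul _ _) !piE.
apply/eqmodP; rewrite /= FracField.equivfE /FracField.mulf.
by rewrite !numden_Ratio ?mulf_neq0 ?denom_ratioP ?oner_eq0 // !mulr1 mulrC.
Qed.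

Implicit Types P Q A B : {poly algC}.

Lemma rdeg_coprime P Q : Q != 0 -> coprimep P Q ->
  rdeg (polyF P / polyF Q) = (maxn (size P) (size Q)).-1.
Proof.
move=> Q0 cPQ; rewrite /rdeg; set g := _ / _.
set n := (frac (repr g)).1; set m := (frac (repr g)).2.
have m0 : m != 0 := denom_ratioP _.
have nQ : n * Q = m * P.
  apply/eqP; rewrite -tofrac_eq !tofracM -mul_repr_den /g /polyF.
  by rewrite mulrAC mulfVK ?tofrac_eq0 // mulrC.
set g0 := gcdp n m.
have g00 : g0 != 0 by rewrite gcdp_eq0 negb_and m0 orbT.
have cnm : coprimep (n %/ g0) (m %/ g0) by rewrite coprimep_div_gcd ?m0 ?orbT.
have : n %/ g0 * Q = m %/ g0 * P.
  apply: (mulIf g00).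
  by rewrite mulrAC divpK ?dvdp_gcdl // mulrAC divpK ?dvdp_gcdr.
by case/(coprimep_cross_eqp _ _ _ _ cnm cPQ) => /eqp_size -> /eqp_size ->.
Qed.

Lemma pdeg_good_fraction P Q : good_fraction P Q ->
  pdeg (Some (polyF P / polyF Q)) = (size P).-1.
Proof. by case=> _ Q0 cPQ sQP; rewrite /= rdeg_coprime // (maxn_idPl (ltnW sQP)). Qed.

Lemma fT_frac d P Q : (0 < d)%N -> P != 0 -> Q != 0 ->
  fT d (Some (polyF P / polyF Q)) =
  Some (polyF (P ^+ d + 'X * Q ^+ d) / polyF (P * Q ^+ d.-1)).
Proof.
case: d => // d _ P0 Q0; rewrite /fT /tvar /polyF.
have [PF QF] : tofrac P != 0 /\ tofrac Q != 0 by rewrite !tofrac_eq0.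
rewrite mulf_eq0 invr_eq0 (negbTE PF) (negbTE QF) /=; congr Some.
rewrite tofracD !tofracM !tofracXn expr_div_n [tofrac Q ^+ d.+1]exprS /=.
have QdF : tofrac Q ^+ d != 0 by rewrite expf_neq0.
exact: frac_step_identity PF QF QdF.
Qed.

Lemma fT_frac_X d A B : (0 < d)%N -> A != 0 -> B != 0 ->
  fT d (Some (polyF ('X * A) / polyF B)) =
  Some (polyF ('X ^+ d.-1 * A ^+ d + B ^+ d) / polyF (A * B ^+ d.-1)).
Proof.
move=> d_gt0 A0 B0; rewrite fT_frac ?mulf_neq0 ?polyX_eq0 //; congr Some.
case: d d_gt0 => // d _ /=.
rewrite exprMn exprS -mulrA -mulrDr -mulrA /polyF !(tofracM 'X).
by rewrite -mulf_div divff ?mul1r // tofrac_eq0 polyX_eq0.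
Qed.

Lemma pdeg_iter_fT d P Q n : (1 < d)%N -> good_fraction P Q ->
  pdeg (iter n (fT d) (Some (polyF P / polyF Q))) = (d ^ n * (size P).-1)%N.
Proof.
move=> d_gt1; elim: n P Q => [|n IHn] P Q gPQ.
  by rewrite mul1n pdeg_good_fraction.
have [P00 Q0 _ _] := gPQ.
have P0 : P != 0 by apply: contraNneq P00 => ->; apply: root0.
rewrite iterSr fT_frac ?(ltnW d_gt1) // IHn; last exact: good_fraction_step.
by rewrite size_step_num // expnSr mulnA.
Qed.

Theorem proposition3p3 (R : realType) (d : nat) (A B : {poly algC}) :
  (2 <= d)%N -> B != 0 -> coprimep A B -> A.[0] = 0 ->
  let c : P1 := Some (polyF A / polyF B) in
  let u : nat -> R := fun n => (pdeg (iter n (fT d) c))%:R / (expn d n)%:R in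
  (u @ \oo --> u 1%N) /\ u 1%N = u 2%N.
Proof.
move=> d_gt1 B0 cAB A00.
have [A1 EA] : exists A1, A = 'X * A1.
  have /factor_theorem [A1 ->] : root A 0 by apply/eqP.
  by exists A1; rewrite subr0 mulrC.
subst A => {A00} c u.
suff [K uK] : exists K, forall n, u n.+1 = K.
  split; last by rewrite !uK.
  by apply: cvg_near_cst; exists 1%N => // [[|n]] // _; rewrite !uK.
have [A1_eq0 | A1_neq0] := eqVneq A1 0.
  exists 0 => n; rewrite /u iterSr /c A1_eq0 mulr0 /polyF tofrac0 mul0r /= eqxx.
  suff -> : iter n (fT d) None = None by rewrite mul0r.
  by elim: n => //= n ->.
exists ((size ('X ^+ d.-1 * A1 ^+ d + B ^+ d)).-1%:R / d%:R) => n.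
rewrite /u; cbv beta.
rewrite iterSr fT_frac_X ?(ltnW d_gt1) // pdeg_iter_fT //; last first.
  exact: good_fraction_root_step.
have dn0 : (d ^ n)%:R != 0 :> R by rewrite pnatr_eq0 expn_eq0 negb_and -lt0n (ltnW d_gt1).
by rewrite expnSr !natrM -mulf_div divff ?mul1r.
Qed.
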